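(* Let $\mathbb{K}$ be a field of characteristic $0$ and let $L=\sum_{i=0}^{J}a_i(n)\sigma^i$ be a nonzero operator with $a_i(n)\in\mathbb{K}[n]$. Then the continued zero index satisfies $C_L\le J$.
   Context: $\sigma$ is the shift operator. The adjoint of $L$ acts on polynomials by $L^*(x(n))=\sum_{i=0}^J a_i(n-i)x(n-i)$. Continued zero index $C_L$: if $L^*(1)\neq0$ then $C_L=0$; if $L^*(1)=0$ then $C_L$ is the positive integer with $L^*(n^{C_L})\neq 0$ and $L^*(n^i)=0$ for $0\le i\le C_L-1$. *)

From HB Require Import structures.
From mathcomp Require Import all_boot all_order all_algebra.
Set Implicit Arguments. Unset Strict Implicit. Unset Printing Implicit Defensive.
Import GRing.Theory.
Local Open Scope ring_scope.

(* The operator L = \sum_{i=0}^J a_i(n) sigma^i is represented by its order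
   bound J and its coefficient family a : nat -> {poly K} (only a 0..a J used). *)
Definition adjoint_op (K : fieldType) (J : nat) (a : nat -> {poly K})
    (x : {poly K}) : {poly K} :=
  \sum_(i < J.+1) ((a i) \Po ('X - (i%:R)%:P)) * (x \Po ('X - (i%:R)%:P)).

Definition continued_zero_index (K : fieldType) (J : nat) (a : nat -> {poly K})
    (c : nat) : Prop :=
  adjoint_op J a 'X^c != 0 /\ (forall i : nat, (i < c)%N -> adjoint_op J a 'X^i = 0).

(* Write [b_i := a_i(n - i)], so that [L^*(n^k) = \sum_i b_i (n - i)^k].
   Expanding binomially, [L^*(n^k)] is a triangular combination of the
   moments [Z_l := \sum_i b_i (-i)^l], [l <= k]; so if [L^*(n^k)] vanished for
   all [k <= J], all moments [Z_0, ..., Z_J] would vanish, i.e.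
   [\sum_i b_i q(-i) = 0] for every [q] of degree at most [J].  In
   characteristic 0 the nodes [0, -1, ..., -J] are distinct, and choosing [q]
   vanishing at all of them except [-j] gives [b_j = 0], hence [a_j = 0] for
   every [j], contradicting [L <> 0].  So some [L^*(n^k)], [k <= J], is
   nonzero, and the least such [k] is [C_L]. *)
From HB Require Import structures.
From mathcomp Require Import all_boot all_order all_algebra.
Set Implicit Arguments. Unset Strict Implicit. Unset Printing Implicit Defensive.
Import GRing.Theory.
Local Open Scope ring_scope.

Lemma pchar0_eqr_nat (K : fieldType) : [pchar K] =i pred0 ->
  forall m n : nat, (m%:R == n%:R :> K) = (m == n).
Proof.
move=> /pcharf0P natf0 m n.
wlog le_mn : m n / (m <= n)%N.
  by move=> W; case: (leqP m n) => [|/ltnW] /W //; rewrite eq_sym (eq_sym n).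
by rewrite eq_sym -subr_eq0 -natrB // natf0 subn_eq0 eqn_leq le_mn.
Qed.

Section AdjointMoments.
Variables (K : fieldType) (J : nat) (a : nat -> {poly K}).

Definition adjoint_coef i := a i \Po ('X - (i%:R)%:P).

Definition adjoint_moment l :=
  \sum_(i < J.+1) adjoint_coef i * ((- (i%:R : K)) ^+ l)%:P.

Lemma adjoint_op_Xn k : adjoint_op J a 'X^k =
  \sum_(l < k.+1) ('X^(k - l) *+ 'C(k, l)) * adjoint_moment l.
Proof.
rewrite /adjoint_op /adjoint_moment.
under eq_bigr => i _ do rewrite comp_Xn_poly -polyCN exprDn mulr_sumr.
rewrite exchange_big /=; apply: eq_bigr => l _.
rewrite mulr_sumr; apply: eq_bigr => i _.
by rewrite /adjoint_coef -mulrnAl mulrCA polyCN rmorphXn /= polyCN.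
Qed.

Lemma adjoint_moment_eq0 :
    (forall k, (k <= J)%N -> adjoint_op J a 'X^k = 0) ->
  forall k, (k <= J)%N -> adjoint_moment k = 0.
Proof.
move=> adj0 k; elim/ltn_ind: k => k IHk le_kJ.
have := adj0 k le_kJ.
rewrite adjoint_op_Xn big_ord_recr /= subnn expr0 binn mulr1n mul1r.
rewrite big1 ?add0r // => l _.
by rewrite IHk ?mulr0 // (leq_trans _ le_kJ) // ltnW.
Qed.

Lemma adjoint_coef_horner (q : {poly K}) : (size q <= J.+1)%N ->
  \sum_(i < J.+1) adjoint_coef i * (q.[- (i%:R)])%:P =
  \sum_(k < J.+1) (q`_k)%:P * adjoint_moment k.
Proof.
move=> le_qJ.
under eq_bigr => i _ do rewrite (horner_coef_wide _ le_qJ) rmorph_sum mulr_sumr.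
rewrite exchange_big /=; apply: eq_bigr => k _.
rewrite /adjoint_moment mulr_sumr; apply: eq_bigr => i _.
by rewrite polyCM mulrCA.
Qed.

Lemma adjoint_op_Xn_eq0_coef : [pchar K] =i pred0 ->
    (forall k, (k <= J)%N -> adjoint_op J a 'X^k = 0) ->
  forall j, (j <= J)%N -> a j = 0.
Proof.
move=> charK0 adj0 j le_jJ.
have node_inj : injective (fun i : nat => - (i%:R : K)).
  by move=> m n /oppr_inj /eqP; rewrite pchar0_eqr_nat // => /eqP.
pose nodes := [seq - (i%:R) : K | i <- iota 0 J.+1].
have mem_nodes i : (- i%:R \in nodes) = (i <= J)%N.
  by rewrite (mem_map node_inj) mem_iota.
have uniq_nodes : uniq nodes by rewrite (map_inj_uniq node_inj) iota_uniq.
pose q := \prod_(z <- rem (- j%:R) nodes) ('X - z%:P).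
have size_q : (size q <= J.+1)%N.
  by rewrite size_prod_XsubC size_rem ?mem_nodes // size_map size_iota.
have root_q i : (i <= J)%N -> root q (- i%:R) = (i != j).
  move=> le_iJ; rewrite root_prod_XsubC mem_rem_uniq // inE /= mem_nodes le_iJ.
  by rewrite andbT eqr_opp pchar0_eqr_nat.
have := adjoint_coef_horner size_q.
rewrite [RHS]big1 => [|k _]; last by rewrite adjoint_moment_eq0 ?mulr0 // -ltnS.
rewrite (bigD1 (Ordinal (le_jJ : (j < J.+1)%N))) //= big1 ?addr0 => [|i ne_ij].
  move/eqP; rewrite mulf_eq0 polyC_eq0 -/(root q _) root_q // eqxx orbF.
  by rewrite comp_poly2_eq0 ?size_XsubC // => /eqP.
by apply/eqP; rewrite mulf_eq0 polyC_eq0 -/(root q _) root_q ?ne_ij ?orbT // -ltnS.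
Qed.

End AdjointMoments.

Theorem lemma2p4 (K : fieldType) (charK0 : [pchar K] =i pred0)
    (J : nat) (a : nat -> {poly K})
    (Lnz : exists i : nat, (i <= J)%N /\ a i != 0) :
  (exists c : nat, continued_zero_index J a c) /\
  (forall c : nat, continued_zero_index J a c -> (c <= J)%N).
Proof.
have adj_neq0 : ~ (forall k, (k <= J)%N -> adjoint_op J a 'X^k = 0).
  move=> adj0; case: Lnz => j [le_jJ /eqP[]].
  exact: (adjoint_op_Xn_eq0_coef charK0 adj0 le_jJ).
have ex_nz : exists k, (k <= J)%N && (adjoint_op J a 'X^k != 0).
  have /existsP [k nz_k] : [exists k : 'I_J.+1, adjoint_op J a 'X^k != 0].
    apply: contraT; rewrite negb_exists => /forallP all0; exfalso.
    apply: adj_neq0 => k le_kJ; apply/eqP/negPn.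
    exact: all0 (Ordinal (le_kJ : (k < J.+1)%N)).
  by exists k; rewrite nz_k -ltnS ltn_ord.
split.
  case: (ex_minnP ex_nz) => c /andP [le_cJ nz_c] min_c.
  exists c; split=> // i lt_ic; apply/eqP; apply: contraTT (lt_ic) => nz_i.
  by rewrite -leqNgt min_c // nz_i (leq_trans (ltnW lt_ic) le_cJ).
move=> c [_ zero_below]; rewrite leqNgt; apply/negP => lt_Jc.
by apply: adj_neq0 => k le_kJ; apply: zero_below (leq_ltn_trans le_kJ lt_Jc).
Qed.
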